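(* Let $\mathcal A$ be the category of all topological abelian groups with continuous homomorphisms, and let $\mathcal B$ be a reflective subcategory of $\mathcal A$. Then $\mathcal B$ has tensor product: for all $G,H\in\mathcal B$ there is a $\mathcal B$-tensor product $(G\otimes_{\mathcal B}H,\otimes_{\mathcal B})$. Furthermore, if $\mathcal B$ is epireflective, then $\otimes_{\mathcal B}:G\times H\to G\otimes_{\mathcal B}H$ is an epi-bihomomorphism, and for every continuous bihomomorphism $b:G\times H\to B$ with $B\in\mathcal B$ the continuous homomorphism $b^{\otimes_{\mathcal B}}:G\otimes_{\mathcal B}H\to B$ with $b^{\otimes_{\mathcal B}}\circ\otimes_{\mathcal B}=b$ is unique.
   Context: A continuous bihomomorphism $b:G\times H\to A$ is a map such that $x\mapsto b(x,h)$ and $y\mapsto b(g,y)$ are continuous homomorphisms for fixed $g,h$, and $b$ is continuous at $(0,0)$. For $G,H\in\mathcal B$, a $\mathcal B$-tensor product is a pair $(T,\otimes_{\mathcal B})$ with $T\in\mathcal B$ and $\otimes_{\mathcal B}:G\times H\to T$ a continuous bihomomorphism such that for every continuous bihomomorphism $b:G\times H\to B$ with $B\in\mathcal B$ there exists a continuous homomorphism $\tilde b:T\to B$ with $\tilde b\circ\otimes_{\mathcal B}=b$. $\mathcal B$ has tensor product if such a pair exists for all $G,H\in\mathcal B$. $\otimes_{\mathcal B}$ is an epi-bihomomorphism if any two group homomorphisms $h_1,h_2$ defined on $G\otimes_{\mathcal B}H$ with the same codomain and $h_1\circ\otimes_{\mathcal B}=h_2\circ\otimes_{\mathcal B}$ satisfy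 $h_1=h_2$. $\mathcal B\subseteq\mathcal A$ is reflective if for each $G\in\mathcal A$ there is a continuous homomorphism $r_{\mathcal B}:G\to r_{\mathcal B}G$ with $r_{\mathcal B}G\in\mathcal B$ such that every continuous homomorphism $h:G\to B$, $B\in\mathcal B$, factors as $h=h^r\circ r_{\mathcal B}$ for a unique continuous homomorphism $h^r:r_{\mathcal B}G\to B$; it is epireflective if moreover each $r_{\mathcal B}$ is an epimorphism. *)

From HB Require Import structures.
From mathcomp Require Import all_boot all_order all_algebra.
From mathcomp Require Import all_classical all_reals all_analysis.
Set Implicit Arguments. Unset Strict Implicit. Unset Printing Implicit Defensive.
Import Order.TTheory GRing.Theory Num.Theory.
Local Open Scope classical_set_scope.
Local Open Scope ring_scope.

(* Objects of the category A: topological abelian groups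
   (mathcomp-analysis' [topologicalZmodType]: Zmodule + topology with
   continuous addition and opposite).  A (full) subcategory B of A is
   given by a predicate on objects. *)
Definition subcat := topologicalZmodType -> Prop.

Definition grp_hom (M N : zmodType) (f : M -> N) : Prop :=
  forall x y, f (x + y) = f x + f y.

Definition cont_hom (G K : topologicalZmodType) (f : G -> K) : Prop :=
  grp_hom f /\ continuous f.

Definition cont_bihom (G H K : topologicalZmodType) (b : G -> H -> K) : Prop :=
  (forall h : H, cont_hom (fun x : G => b x h)) /\
  (forall g : G, cont_hom (b g)) /\
  {for (0, 0), continuous (fun p : G * H => b p.1 p.2)}.

Definition is_tensor (B : subcat) (G H T : topologicalZmodType)
  (t : G -> H -> T) : Prop :=
  B T /\ cont_bihom t /\
  forall (C : topologicalZmodType), B C ->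
    forall b : G -> H -> C, cont_bihom b ->
      exists bt : T -> C, cont_hom bt /\ forall g h, bt (t g h) = b g h.

Arguments is_tensor : clear implicits.

Definition has_tensor (B : subcat) : Prop :=
  forall G H : topologicalZmodType, B G -> B H ->
    exists (T : topologicalZmodType) (t : G -> H -> T), is_tensor B G H T t.

Definition epi_bihom {G H T : topologicalZmodType} (t : G -> H -> T) : Prop :=
  forall (M : zmodType) (h1 h2 : T -> M), grp_hom h1 -> grp_hom h2 ->
    (forall g h, h1 (t g h) = h2 (t g h)) -> h1 = h2.

Definition is_reflection (B : subcat) (G R : topologicalZmodType)
  (r : G -> R) : Prop :=
  B R /\ cont_hom r /\
  forall (C : topologicalZmodType), B C -> forall h : G -> C, cont_hom h ->
    exists hr : R -> C, (cont_hom hr /\ forall x, hr (r x) = h x) /\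
      forall hr' : R -> C, cont_hom hr' -> (forall x, hr' (r x) = h x) -> hr' = hr.

Arguments is_reflection : clear implicits.

Definition epi_A {G R : topologicalZmodType} (r : G -> R) : Prop :=
  forall (C : topologicalZmodType) (h1 h2 : R -> C), cont_hom h1 -> cont_hom h2 ->
    (forall x, h1 (r x) = h2 (r x)) -> h1 = h2.

Definition reflective (B : subcat) : Prop :=
  forall G : topologicalZmodType, exists (R : topologicalZmodType) (r : G -> R),
    is_reflection B G R r.

Definition epireflective (B : subcat) : Prop :=
  forall G : topologicalZmodType, exists (R : topologicalZmodType) (r : G -> R),
    is_reflection B G R r /\ epi_A r.

From HB Require Import structures.
From mathcomp Require Import all_boot all_order all_algebra.
From mathcomp Require Import all_classical all_reals all_analysis.
Set Implicit Arguments. Unset Strict Implicit. Unset Printing Implicit Defensive.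
Import Order.TTheory GRing.Theory Num.Theory.
Local Open Scope classical_set_scope.
Local Open Scope ring_scope.
Local Open Scope quotient_scope.

(* The algebraic tensor product of G and H (formal sums of pairs, identified
   when no bihomomorphism tells them apart) carries the coarsest group topology
   making continuous every homomorphism whose composite with the canonical map
   is a continuous bihomomorphism; this is the tensor product in the category
   of all topological abelian groups.  Reflecting it into B gives a
   B-tensor product.  Uniqueness of the induced maps and the epi property come
   from the fact that pure tensors generate the algebraic tensor product; to
   apply the epimorphism property to arbitrary group homomorphisms, their
   codomain is given the indiscrete topology. *)

Lemma grp_hom0 (M N : zmodType) (f : M -> N) : grp_hom f -> f 0 = 0.
Proof. by move=> hf; apply: (@addrI _ (f 0)); rewrite -hf !addr0. Qed.

Lemma grp_homN (M N : zmodType) (f : M -> N) : grp_hom f -> {morph f : x / - x}.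
Proof. by move=> hf x; apply/eqP; rewrite -addr_eq0 -hf addNr (grp_hom0 hf). Qed.

Lemma grp_homB (M N : zmodType) (f : M -> N) : grp_hom f -> {morph f : x y / x - y}.
Proof. by move=> hf x y; rewrite hf grp_homN. Qed.

Definition bihom (G H C : zmodType) (b : G -> H -> C) : Prop :=
  (forall h, grp_hom (b^~ h)) /\ (forall g, grp_hom (b g)).

Section AlgebraicTensor.
Variables G H : zmodType.

Definition tensor_eval (C : zmodType) (b : G -> H -> C) (s : seq (G * H)) : C :=
  \sum_(p <- s) b p.1 p.2.

Definition tensor_equiv (s1 s2 : seq (G * H)) : bool :=
  `[< forall (C : zmodType) (b : G -> H -> C), bihom b ->
        tensor_eval b s1 = tensor_eval b s2 >].

Lemma tensor_equiv_refl : reflexive tensor_equiv.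
Proof. by move=> s; apply/asboolP. Qed.

Lemma tensor_equiv_sym : symmetric tensor_equiv.
Proof. by move=> s1 s2; apply/asboolP/asboolP => e C b hb; rewrite e. Qed.

Lemma tensor_equiv_trans : transitive tensor_equiv.
Proof.
move=> s2 s1 s3 /asboolP e12 /asboolP e23.
by apply/asboolP => C b hb; rewrite e12 ?e23.
Qed.

Definition tensor_equiv_rel :=
  EquivRel tensor_equiv tensor_equiv_refl tensor_equiv_sym tensor_equiv_trans.

Definition alg_tensor : Type := {eq_quot tensor_equiv_rel}.

Definition tensor_lift (C : zmodType) (b : G -> H -> C) (x : alg_tensor) : C :=
  tensor_eval b (repr x).

Lemma tensor_lift_pi (C : zmodType) (b : G -> H -> C) s :
  bihom b -> tensor_lift b (\pi_alg_tensor s) = tensor_eval b s.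
Proof.
move=> hb; have /asboolP e : tensor_equiv_rel (repr (\pi_alg_tensor s)) s.
  by apply/eqmodP; rewrite reprK.
exact: e.
Qed.

Lemma alg_tensor_ext (x y : alg_tensor) :
  (forall (C : zmodType) (b : G -> H -> C), bihom b ->
     tensor_lift b x = tensor_lift b y) -> x = y.
Proof. by move=> e; rewrite -[x]reprK -[y]reprK; apply/eqmodP/asboolP. Qed.

Definition tensor_neg (p : G * H) : G * H := (- p.1, p.2).

Lemma tensor_eval_neg (C : zmodType) (b : G -> H -> C) s :
  bihom b -> tensor_eval b (map tensor_neg s) = - tensor_eval b s.
Proof.
move=> [hb _]; rewrite /tensor_eval big_map -sumrN.
by apply: eq_bigr => p _; exact: (grp_homN (hb p.2)).
Qed.

Definition tensor_add (x y : alg_tensor) : alg_tensor :=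
  \pi_alg_tensor (repr x ++ repr y).
Definition tensor_opp (x : alg_tensor) : alg_tensor :=
  \pi_alg_tensor (map tensor_neg (repr x)).
Definition tensor_zero : alg_tensor := \pi_alg_tensor [::].

Lemma tensor_lift_add (C : zmodType) (b : G -> H -> C) x y : bihom b ->
  tensor_lift b (tensor_add x y) = tensor_lift b x + tensor_lift b y.
Proof. by move=> hb; rewrite tensor_lift_pi // /tensor_eval big_cat. Qed.

Lemma tensor_lift_opp (C : zmodType) (b : G -> H -> C) x : bihom b ->
  tensor_lift b (tensor_opp x) = - tensor_lift b x.
Proof. by move=> hb; rewrite tensor_lift_pi // tensor_eval_neg. Qed.

Lemma tensor_lift_zero (C : zmodType) (b : G -> H -> C) : bihom b ->
  tensor_lift b tensor_zero = 0.
Proof. by move=> hb; rewrite tensor_lift_pi // /tensor_eval big_nil. Qed.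

Lemma tensor_addA : associative tensor_add.
Proof.
by move=> x y z; apply: alg_tensor_ext => C b hb; rewrite !tensor_lift_add // addrA.
Qed.

Lemma tensor_addC : commutative tensor_add.
Proof.
by move=> x y; apply: alg_tensor_ext => C b hb; rewrite !tensor_lift_add // addrC.
Qed.

Lemma tensor_add0 : left_id tensor_zero tensor_add.
Proof.
move=> x; apply: alg_tensor_ext => C b hb.
by rewrite tensor_lift_add ?tensor_lift_zero ?add0r.
Qed.

Lemma tensor_addN : left_inverse tensor_zero tensor_opp tensor_add.
Proof.
move=> x; apply: alg_tensor_ext => C b hb.
by rewrite tensor_lift_add ?tensor_lift_opp ?tensor_lift_zero ?addNr.
Qed.

HB.instance Definition _ := Choice.on alg_tensor.
HB.instance Definition _ :=
  GRing.isZmodule.Build alg_tensor tensor_addA tensor_addC tensor_add0 tensor_addN.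

Lemma tensor_lift_hom (C : zmodType) (b : G -> H -> C) :
  bihom b -> grp_hom (tensor_lift b).
Proof. by move=> hb x y; exact: tensor_lift_add. Qed.

Definition tmul (g : G) (h : H) : alg_tensor := \pi_alg_tensor [:: (g, h)].

Lemma tensor_lift_tmul (C : zmodType) (b : G -> H -> C) g h :
  bihom b -> tensor_lift b (tmul g h) = b g h.
Proof. by move=> hb; rewrite tensor_lift_pi // /tensor_eval big_seq1. Qed.

Lemma tmul_bihom : bihom tmul.
Proof.
split=> [h x y|g x y]; apply: alg_tensor_ext => C b hb;
  rewrite (tensor_lift_hom hb) !tensor_lift_tmul //; [exact: hb.1 | exact: hb.2].
Qed.

Lemma alg_tensor_pi_cons (p : G * H) s :
  \pi_alg_tensor (p :: s) = tmul p.1 p.2 + \pi_alg_tensor s.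
Proof.
apply: alg_tensor_ext => C b hb.
by rewrite (tensor_lift_hom hb) !tensor_lift_pi // /tensor_eval big_cons big_seq1.
Qed.

Lemma alg_tensor_hom_ext (M : zmodType) (f1 f2 : alg_tensor -> M) :
  grp_hom f1 -> grp_hom f2 ->
  (forall g h, f1 (tmul g h) = f2 (tmul g h)) -> f1 = f2.
Proof.
move=> hf1 hf2 e; apply: funext => x; rewrite -[x]reprK.
elim: (repr x) => [|p s IH].
  by rewrite -[\pi_alg_tensor [::]]/(0 : alg_tensor) !grp_hom0.
by rewrite alg_tensor_pi_cons hf1 hf2 IH e.
Qed.
End AlgebraicTensor.

Arguments tmul {G H}.

Lemma fst_continuous (X Y : topologicalType) : continuous (@fst X Y).
Proof. by move=> ?; exact: cvg_fst. Qed.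

Lemma snd_continuous (X Y : topologicalType) : continuous (@snd X Y).
Proof. by move=> ?; exact: cvg_snd. Qed.

Lemma continuous_subr (X : topologicalType) (A : topologicalZmodType)
    (f g : X -> A) (x : X) :
  {for x, continuous f} -> {for x, continuous g} ->
  {for x, continuous (fun y => f y - g y)}.
Proof.
move=> cf cg; apply: (@continuous_comp _ _ _ (fun y => (f y, g y))
  (fun z : A * A => z.1 - z.2)); [exact: cvg_pair | exact: sub_continuous].
Qed.

Section ProdTopologicalZmod.
Variables A B : topologicalZmodType.

Lemma prod_sub_continuous : continuous (fun x : (A * B) * (A * B) => x.1 - x.2).
Proof.
move=> x; apply: cvg_pair;
  [apply: (@continuous_subr _ _ (fst \o fst) (fst \o snd))
  |apply: (@continuous_subr _ _ (snd \o fst) (snd \o snd))];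
  by apply: continuous_comp; apply: fst_continuous || apply: snd_continuous.
Qed.

Definition prod_topologicalZmod : Type := (A * B)%type.
HB.instance Definition _ := GRing.Zmodule.on prod_topologicalZmod.
HB.instance Definition _ := Topological.on prod_topologicalZmod.
HB.instance Definition _ := PreTopologicalNmodule_isTopologicalZmodule.Build
  prod_topologicalZmod prod_sub_continuous.
End ProdTopologicalZmod.

Section Indiscrete.
Variable M : zmodType.

Definition indiscrete : Type := initial_topology (fun _ : M => true).
HB.instance Definition _ := GRing.Zmodule.on indiscrete.
HB.instance Definition _ := Topological.on indiscrete.

Lemma indiscrete_continuous (X : topologicalType) (f : X -> indiscrete) :
  continuous f.
Proof. by apply: continuous_comp_initial; exact: cst_continuous. Qed.

HB.instance Definition _ := PreTopologicalNmodule_isTopologicalZmodule.Build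
  indiscrete (@indiscrete_continuous _ _).
End Indiscrete.

Lemma cont_hom_comp (X Y Z : topologicalZmodType) (f : X -> Y) (g : Y -> Z) :
  cont_hom f -> cont_hom g -> cont_hom (g \o f).
Proof.
move=> [hf cf] [hg cg]; split=> [x y|x]; first by rewrite /= hf hg.
exact: continuous_comp (cf x) (cg (f x)).
Qed.

Lemma cont_hom0 (X C : topologicalZmodType) : cont_hom (fun _ : X => 0 : C).
Proof. by split=> [x y|]; [rewrite addr0 | exact: cst_continuous]. Qed.

Lemma cont_hom_pair (X C1 C2 : topologicalZmodType) (f1 : X -> C1) (f2 : X -> C2) :
  cont_hom f1 -> cont_hom f2 ->
  cont_hom (fun x => (f1 x, f2 x) : prod_topologicalZmod C1 C2).
Proof.
move=> [hf1 cf1] [hf2 cf2]; split=> [x y|x]; first by rewrite hf1 hf2.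
exact: cvg_pair (cf1 x) (cf2 x).
Qed.

Lemma cont_bihom_bihom (G H C : topologicalZmodType) (b : G -> H -> C) :
  cont_bihom b -> bihom b.
Proof. by move=> [bl [br _]]; split=> [h|g]; [exact: (bl h).1 | exact: (br g).1]. Qed.

Lemma cont_bihom_comp (G H C D : topologicalZmodType) (b : G -> H -> C) (f : C -> D) :
  cont_hom f -> cont_bihom b -> cont_bihom (fun g h => f (b g h)).
Proof.
move=> hf [bl [br b0]]; split; [|split].
- by move=> h; exact: cont_hom_comp (bl h) hf.
- by move=> g; exact: cont_hom_comp (br g) hf.
- exact: continuous_comp b0 (hf.2 _).
Qed.

Lemma cont_bihom0 (G H C : topologicalZmodType) :
  cont_bihom (fun (_ : G) (_ : H) => 0 : C).
Proof.
split; [|split]; [move=> h | move=> g | exact: cst_continuous]; exact: cont_hom0.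
Qed.

Lemma cont_bihom_pair (G H C1 C2 : topologicalZmodType)
    (b1 : G -> H -> C1) (b2 : G -> H -> C2) :
  cont_bihom b1 -> cont_bihom b2 ->
  cont_bihom (fun g h => (b1 g h, b2 g h) : prod_topologicalZmod C1 C2).
Proof.
move=> [l1 [r1 c1]] [l2 [r2 c2]]; split; [|split].
- by move=> h; exact: cont_hom_pair (l1 h) (l2 h).
- by move=> g; exact: cont_hom_pair (r1 g) (r2 g).
- exact: cvg_pair c1 c2.
Qed.

(* Closure under pairing makes the preimages of neighbourhoods under members
   of the family a filter base. *)
Record hom_family (M : zmodType) := HomFamily {
  in_family :> forall C : topologicalZmodType, (M -> C) -> Prop;
  family_hom : forall (C : topologicalZmodType) (f : M -> C),
    in_family f -> grp_hom f;
  family_pair : forall (C1 C2 : topologicalZmodType) (f1 : M -> C1) (f2 : M -> C2),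
    in_family f1 -> in_family f2 ->
    in_family (fun x => (f1 x, f2 x) : prod_topologicalZmod C1 C2);
  family_inhabited : exists (C : topologicalZmodType) (f : M -> C), in_family f }.

Definition initial_group (M : zmodType) (F : hom_family M) : Type := M.

Section InitialGroupTopology.
Variables (M : zmodType) (F : hom_family M).
Local Notation initial_group := (initial_group F).

HB.instance Definition _ := GRing.Zmodule.on initial_group.

Definition initial_group_nbhs (x : initial_group) : set_system initial_group :=
  [set U | exists (C : topologicalZmodType) (f : M -> C),
     F C f /\ exists2 V, nbhs (f x) V & f @^-1` V `<=` U].

HB.instance Definition _ := hasNbhs.Build initial_group initial_group_nbhs.

Lemma initial_group_nbhs_singleton (x : initial_group) (U : set initial_group) :
  nbhs x U -> U x.
Proof. by move=> [C [f [_ [V /nbhs_singleton Vfx sV]]]]; exact: sV Vfx. Qed.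

Lemma initial_group_filter (x : initial_group) : ProperFilter (nbhs x).
Proof.
split; first by move=> /initial_group_nbhs_singleton.
split.
- have [C [f Ff]] := family_inhabited F.
  by exists C, f; split=> //; exists setT => //; exact: filterT.
- move=> U1 U2 [C1 [f1 [Ff1 [V1 hV1 sV1]]]] [C2 [f2 [Ff2 [V2 hV2 sV2]]]].
  exists (prod_topologicalZmod C1 C2), (fun y => (f1 y, f2 y)).
  split; first exact: family_pair Ff1 Ff2.
  exists (V1 `*` V2); first by exists (V1, V2).
  by move=> y [/= ? ?]; split; [exact: sV1 | exact: sV2].
- move=> U1 U2 sU [C [f [Ff [V hV sV]]]].
  by exists C, f; split=> //; exists V => // y /sV /sU.
Qed.

Lemma initial_group_nbhs_nbhs (x : initial_group) (U : set initial_group) :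
  nbhs x U -> nbhs x (nbhs^~ U).
Proof.
move=> [C [f [Ff [V hV sV]]]]; exists C, f; split=> //.
exists (nbhs^~ V); first exact: nbhs_interior.
by move=> y hy; exists C, f; split=> //; exists V.
Qed.

HB.instance Definition _ := Nbhs_isNbhsTopological.Build initial_group
  initial_group_filter initial_group_nbhs_singleton initial_group_nbhs_nbhs.

Lemma family_continuous (C : topologicalZmodType) (f : M -> C) :
  F C f -> continuous (f : initial_group -> C).
Proof. by move=> Ff x V hV; exists C, f; split=> //; exists V. Qed.

Lemma continuous_to_initial_group (X : topologicalType) (g : X -> initial_group) x :
  (forall (C : topologicalZmodType) (f : M -> C), F C f ->
     {for x, continuous (f \o g)}) ->
  {for x, continuous g}.
Proof.
move=> cg U [C [f [Ff [V hV sV]]]].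
exact: filterS (fun y (Vy : V (f (g y))) => sV _ Vy) (cg C f Ff V hV).
Qed.

Lemma initial_group_sub_continuous :
  continuous (fun x : initial_group * initial_group => x.1 - x.2).
Proof.
move=> x; apply: continuous_to_initial_group => C f Ff.
have -> : f \o (fun x : initial_group * initial_group => x.1 - x.2) =
    (fun y => f y.1 - f y.2).
  by apply: funext => y /=; rewrite (grp_homB (family_hom Ff)).
have fc := family_continuous Ff.
by apply: continuous_subr; apply: continuous_comp;
  apply: fst_continuous || apply: snd_continuous || apply: fc.
Qed.

HB.instance Definition _ := PreTopologicalNmodule_isTopologicalZmodule.Build
  initial_group initial_group_sub_continuous.
End InitialGroupTopology.

Section TopologicalTensor.
Variables G H : topologicalZmodType.

Definition tensor_admissible (C : topologicalZmodType) (f : alg_tensor G H -> C) :=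
  grp_hom f /\ cont_bihom (fun g h => f (tmul g h)).

Lemma tensor_admissible_pair (C1 C2 : topologicalZmodType)
    (f1 : alg_tensor G H -> C1) (f2 : alg_tensor G H -> C2) :
  tensor_admissible f1 -> tensor_admissible f2 ->
  tensor_admissible (fun x => (f1 x, f2 x) : prod_topologicalZmod C1 C2).
Proof.
move=> [hf1 cb1] [hf2 cb2]; split; last exact: cont_bihom_pair.
by move=> x y; rewrite hf1 hf2.
Qed.

Lemma tensor_admissible0 : tensor_admissible (fun _ => 0 : G).
Proof. by split; [move=> x y; rewrite addr0 | exact: cont_bihom0]. Qed.

Definition tensor_family : hom_family (alg_tensor G H) :=
  @HomFamily _ tensor_admissible (fun C f adm => adm.1) tensor_admissible_pair
    (ex_intro _ G (ex_intro _ _ tensor_admissible0)).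

Definition tensor : topologicalZmodType := initial_group tensor_family.

Lemma tensor_lift_cont_hom (C : topologicalZmodType) (b : G -> H -> C) :
  cont_bihom b -> cont_hom (tensor_lift b : tensor -> C).
Proof.
move=> cb; have hb := cont_bihom_bihom cb.
suff adm : tensor_admissible (tensor_lift b).
  split; first exact: tensor_lift_hom.
  exact: (@family_continuous _ tensor_family _ _ adm).
split; first exact: tensor_lift_hom.
suff -> : (fun g h => tensor_lift b (tmul g h)) = b by [].
by apply: funext => g; apply: funext => h; rewrite tensor_lift_tmul.
Qed.

Lemma tmul_cont_bihom : cont_bihom (tmul : G -> H -> tensor).
Proof.
have [tl tr] := @tmul_bihom G H.
split; [|split].
- move=> h; split=> [|x]; first exact: tl.
  apply: continuous_to_initial_group => C f [_ [/(_ h) [_ cf] _]]; exact: cf.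
- move=> g; split=> [|x]; first exact: tr.
  apply: continuous_to_initial_group => C f [_ [_ [/(_ g) [_ cf] _]]]; exact: cf.
- by apply: continuous_to_initial_group => C f [_ [_ [_ cf]]]; exact: cf.
Qed.
End TopologicalTensor.

Section TensorReflection.
Variables (B : subcat) (G H R : topologicalZmodType) (r : tensor G H -> R).
Hypothesis r_refl : is_reflection B (tensor G H) R r.

Lemma reflection_is_tensor : is_tensor B G H R (fun g h => r (tmul g h)).
Proof.
have [BR [hr univ]] := r_refl; split=> //.
split; first exact: cont_bihom_comp hr (tmul_cont_bihom G H).
move=> C BC b cb; have [bt [[cbt ebt] _]] := univ C BC _ (tensor_lift_cont_hom cb).
by exists bt; split=> // g h; rewrite ebt tensor_lift_tmul //; exact: cont_bihom_bihom.
Qed.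

Lemma reflection_tensor_hom_unique (C : topologicalZmodType) (bt1 bt2 : R -> C) :
  B C -> cont_hom bt1 -> cont_hom bt2 ->
  (forall g h, bt1 (r (tmul g h)) = bt2 (r (tmul g h))) -> bt1 = bt2.
Proof.
move=> BC cbt1 cbt2 e; have [_ [hr univ]] := r_refl.
have c1 := cont_hom_comp hr cbt1; have c2 := cont_hom_comp hr cbt2.
have E : bt1 \o r = bt2 \o r by apply: alg_tensor_hom_ext; [exact: c1.1 | exact: c2.1 |].
have [bt [_ bt_uniq]] := univ C BC _ c1.
by rewrite (bt_uniq bt1 cbt1) // (bt_uniq bt2 cbt2) // => x; rewrite E.
Qed.

Lemma epi_reflection_tensor_epi_bihom :
  epi_A r -> epi_bihom (fun g h => r (tmul g h)).
Proof.
move=> repi M h1 h2 hh1 hh2 e; have [_ [[hr _] _]] := r_refl.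
have E : h1 \o r = h2 \o r.
  by apply: alg_tensor_hom_ext => // x y /=; rewrite hr ?hh1 ?hh2.
apply: (repi (indiscrete M)).
- by split=> //; exact: indiscrete_continuous.
- by split=> //; exact: indiscrete_continuous.
- by move=> x; rewrite -[h1 (r x)]/((h1 \o r) x) E.
Qed.
End TensorReflection.

Lemma reflected_tensor (B : subcat) (G H : topologicalZmodType) :
  reflective B ->
  exists (T : topologicalZmodType) (t : G -> H -> T),
    is_tensor B G H T t /\
    (epireflective B ->
       epi_bihom t /\
       forall (C : topologicalZmodType), B C ->
         forall b : G -> H -> C, cont_bihom b ->
           forall bt1 bt2 : T -> C, cont_hom bt1 -> cont_hom bt2 ->
             (forall g h, bt1 (t g h) = b g h) ->
             (forall g h, bt2 (t g h) = b g h) -> bt1 = bt2).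
Proof.
move=> Brefl.
(* T may not depend on whether B is epireflective, so the choice of the
   reflection is made here once and for all. *)
have [R [r [r_refl r_epi]]] : exists (R : topologicalZmodType) (r : tensor G H -> R),
    is_reflection B (tensor G H) R r /\ (epireflective B -> epi_A r).
  have [/(_ (tensor G H)) [R [r [? ?]]]|not_epi] := pselect (epireflective B).
    by exists R, r.
  have [R [r ?]] := Brefl (tensor G H).
  by exists R, r; split=> // /not_epi.
exists R, (fun g h => r (tmul g h)); split; first exact: reflection_is_tensor.
move=> /r_epi repi; split; first exact: epi_reflection_tensor_epi_bihom r_refl repi.
move=> C BC b _ bt1 bt2 cbt1 cbt2 e1 e2.
by apply: (reflection_tensor_hom_unique r_refl BC cbt1 cbt2) => g h; rewrite e1 e2.
Qed.

Theorem proposition2p6 (B : subcat) :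
  reflective B ->
  has_tensor B /\
  (forall G H : topologicalZmodType, B G -> B H ->
     exists (T : topologicalZmodType) (t : G -> H -> T),
       is_tensor B G H T t /\
       (epireflective B ->
          epi_bihom t /\
          forall (C : topologicalZmodType), B C ->
            forall b : G -> H -> C, cont_bihom b ->
              forall bt1 bt2 : T -> C, cont_hom bt1 -> cont_hom bt2 ->
                (forall g h, bt1 (t g h) = b g h) ->
                (forall g h, bt2 (t g h) = b g h) -> bt1 = bt2)).
Proof.
move=> Brefl; split=> [G H _ _|G H _ _]; last exact: reflected_tensor.
by have [T [t [Tt _]]] := reflected_tensor G H Brefl; exists T, t.
Qed.
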